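(* Let $1\le a\le b\le c$ be integers, $K=K_{a,b,c}$ and $k=a+b+c$. Given $0<d\le 3/5$ and $\beta,\rho>0$, there exists $n_0$ such that the following holds. If every $3$-graph $H$ on $n>n_0$ vertices with $\delta_1(H)\ge d\binom n2$ has a $\beta$-deficient $K$-tiling, then every $3$-graph $H'$ on $n'>\max\{n_0,5\}$ vertices with $\delta_1(H')\ge(d-\rho)\binom{n'}2$ has a $(\beta+2k\rho)$-deficient $K$-tiling.
   Context: $K_{a,b,c}$ is the complete $3$-partite $3$-graph with parts of sizes $a,b,c$. $\delta_1(H)$ is the minimum over vertices of the number of edges containing the vertex. A $K$-tiling is a collection of vertex-disjoint copies of $K$. For $0\le\beta\le1$, a $K$-tiling of an $n$-vertex $3$-graph is $\beta$-deficient if it covers all but at most $\beta n$ vertices. *)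

From mathcomp Require Import all_boot all_order all_algebra.
Set Implicit Arguments. Unset Strict Implicit. Unset Printing Implicit Defensive.
Import Order.TTheory GRing.Theory Num.Theory.
Local Open Scope ring_scope.

Definition is_3graph (n : nat) (E : {set {set 'I_n}}) : Prop :=
  forall e, e \in E -> #|e| = 3.

Definition deg1 (n : nat) (E : {set {set 'I_n}}) (v : 'I_n) : nat :=
  #|[set e in E | v \in e]|.

Definition min_deg1_ge (R : numDomainType) (n : nat) (E : {set {set 'I_n}}) (x : R) : Prop :=
  forall v : 'I_n, x <= (deg1 E v)%:R.

Definition is_Kcopy (a b c n : nat) (E : {set {set 'I_n}})
    (T : {set 'I_n} * {set 'I_n} * {set 'I_n}) : Prop :=
  let: (A, B, C) := T in
  [/\ #|A| = a, #|B| = b, #|C| = c,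
      [/\ [disjoint A & B], [disjoint A & C] & [disjoint B & C]] &
      forall x y z, x \in A -> y \in B -> z \in C -> [set x; y; z] \in E].

Definition copy_verts (n : nat) (T : {set 'I_n} * {set 'I_n} * {set 'I_n}) : {set 'I_n} :=
  let: (A, B, C) := T in A :|: B :|: C.

Definition is_Ktiling (a b c n : nat) (E : {set {set 'I_n}})
    (s : seq ({set 'I_n} * {set 'I_n} * {set 'I_n})) : Prop :=
  (forall T, T \in s -> is_Kcopy a b c E T) /\
  (forall i j, (i < j)%N -> (j < size s)%N ->
     [disjoint copy_verts (nth (set0, set0, set0) s i)
             & copy_verts (nth (set0, set0, set0) s j)]).

Definition tiling_cover (n : nat) (s : seq ({set 'I_n} * {set 'I_n} * {set 'I_n})) : {set 'I_n} :=
  \bigcup_(T <- s) copy_verts T.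

Definition has_deficient_Ktiling (R : numDomainType) (a b c n : nat)
    (E : {set {set 'I_n}}) (beta : R) : Prop :=
  exists s, is_Ktiling a b c E s /\
    (#|~: tiling_cover s|%:R <= beta * n%:R :> R).

From mathcomp Require Import all_boot all_order all_algebra.
From mathcomp Require Import reals.
From mathcomp Require Import ring lra zify.
Set Implicit Arguments.
Unset Strict Implicit.
Unset Printing Implicit Defensive.
Import Order.TTheory GRing.Theory Num.Theory.
Local Open Scope ring_scope.

(* Extend H' by m = floor(2 rho N) new vertices and make every triple meeting a
   new vertex an edge.  An old vertex gains C(N+m-1,2) - C(N-1,2) edges, which
   for m >= 3 rho N / 2 and N >= 13 lifts its degree from (d - rho) C(N,2) to
   d C(N+m,2); a new vertex has degree C(N+m-1,2) >= 3/5 C(N+m,2).  Restricting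
   a beta-deficient K-tiling of the extension to the copies inside H' drops at
   most m copies, since they are disjoint and each dropped one meets a new
   vertex; so at most beta N + k m <= (beta + 2 k rho) N vertices of H' stay
   uncovered when beta < 1, and for beta >= 1 the empty tiling will do. *)

Local Notation copy n := ({set 'I_n} * {set 'I_n} * {set 'I_n})%type.

Lemma leq_ord_inj (N n : nat) (g : 'I_N -> 'I_n) : injective g -> (N <= n)%N.
Proof. by move/leq_card; rewrite !card_ord. Qed.

Lemma card_bigcup_seq_disjoint (X : finType) (I : eqType) (F : I -> {set X}) (s : seq I) :
  pairwise (fun x y => [disjoint F x & F y]) s ->
  #|\bigcup_(x <- s) F x| = (\sum_(x <- s) #|F x|)%N.
Proof.
elim: s => [|x s IHs] /=; first by rewrite !big_nil cards0.
case/andP=> /allP-disj_x /IHs card_s; rewrite !big_cons -card_s cardsU.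
suff /disjoint_setI0-> : [disjoint F x & \bigcup_(y <- s) F y] by rewrite cards0 subn0.
rewrite disjoint_sym disjoints_subset big_seq.
apply: (big_ind (fun U : {set X} => U \subset ~: F x)) => [|U V|y /disj_x].
- exact: sub0set.
- by rewrite subUset => -> ->.
by rewrite -disjoints_subset disjoint_sym.
Qed.

Lemma count_meeting_le (X : finType) (I : eqType) (F : I -> {set X}) (B : {set X}) (s : seq I) :
  pairwise (fun x y => [disjoint F x & F y]) s ->
  (count (fun x => ~~ [disjoint F x & B]) s <= #|B|)%N.
Proof.
move=> disj_s; rewrite -size_filter; set t := filter _ s.
have disj_t : pairwise (fun x y => [disjoint F x :&: B & F y :&: B]) t.
  apply: sub_pairwise (pairwise_filter _ disj_s) => x y.
  exact: disjointW (subsetIl _ _) (subsetIl _ _).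
rewrite -sum1_size; apply: (@leq_trans #|\bigcup_(x <- t) (F x :&: B)|).
  rewrite card_bigcup_seq_disjoint // !big_seq; apply: leq_sum => x.
  by rewrite mem_filter card_gt0 setI_eq0 => /andP[].
apply/subset_leq_card/(big_ind (fun U : {set X} => U \subset B)) => [|U V|x _].
- exact: sub0set.
- by rewrite subUset => -> ->.
- exact: subsetIr.
Qed.

Lemma card_preimset_inj (aT rT : finType) (f : aT -> rT) (A : {set rT}) :
  injective f -> A \subset f @: setT -> #|f @^-1: A| = #|A|.
Proof.
move=> f_inj /subsetP A_range; rewrite -(card_imset _ f_inj).
congr #|pred_of_set _|; apply/setP=> y; apply/imsetP/idP => [[x + ->]|Ay]; first by rewrite inE.
have /imsetP[x _ fx] := A_range y Ay.
by exists x; rewrite // inE -fx.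
Qed.

Lemma disjoint_preimset (aT rT : finType) (f : aT -> rT) (A B : {set rT}) :
  [disjoint A & B] -> [disjoint f @^-1: A & f @^-1: B].
Proof. by rewrite -!setI_eq0 -preimsetI => /eqP->; rewrite preimset0. Qed.

Definition triples_through (X : finType) (v : X) (O : {set X}) : {set {set X}} :=
  [set e : {set X} | [&& #|e| == 3, v \in e & e \subset O]].

Lemma card_triples_through (X : finType) (v : X) (O : {set X}) :
  v \in O -> #|triples_through v O| = 'C(#|O|.-1, 2).
Proof.
move=> vO; have vOv : v \notin O :\ v by rewrite setD11.
pose pairs := [set A : {set X} | A \subset O :\ v & #|A| == 2].
have v_pairs A : A \in pairs -> v \notin A.
  by rewrite inE => /andP[/subsetP AOv _]; apply: contra vOv => /AOv.
have -> : triples_through v O = [set v |: A | A in pairs].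
  apply/setP=> e; rewrite inE; apply/and3P/imsetP => [[/eqP e3 ve eO]|[A pA ->]].
    exists (e :\ v); last by rewrite setD1K.
    by have := cardsD1 v e; rewrite inE setSD // ve e3 add1n => -[<-].
  have vA := v_pairs A pA; move: pA; rewrite inE => /andP[AOv /eqP A2].
  split; [by rewrite cardsU1 vA A2 | exact: setU11 |].
  by rewrite subUset sub1set vO (subset_trans AOv) ?subD1set.
rewrite card_in_imset ?cards_draws; last first.
  by move=> A B pA pB /(congr1 (fun S => S :\ v)); rewrite !setU1K ?v_pairs.
by rewrite (cardsD1 v O) vO.
Qed.

Lemma natr_bin2 (R : numFieldType) (x : nat) :
  ('C(x, 2)%:R : R) = x%:R * (x%:R - 1) / 2.
Proof.
suff <- : ('C(x, 2)%:R : R) * 2 = x%:R * (x%:R - 1) by rewrite mulfK ?pnatr_eq0.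
elim: x => [|x IHx]; first by rewrite !mul0r.
by rewrite binS bin1 natrD mulrDl IHx -natr1; ring.
Qed.

Lemma ler_bin2_pred (R : realFieldType) (d : R) (n : nat) :
  d <= 3 / 5 -> (5 <= n)%N -> d * 'C(n, 2)%:R <= 'C(n.-1, 2)%:R.
Proof.
case: n => // n d35 n5; rewrite /= !natr_bin2 -natr1.
have {n5} n4 : 4 <= (n%:R : R) by rewrite (ler_nat R 4).
have : d * ((n%:R + 1) * n%:R) <= 3 / 5 * ((n%:R + 1) * n%:R) by apply: ler_wpM2r; nra.
nra.
Qed.

Lemma ler_bin2_gain (R : realFieldType) (d rho : R) (N m D : nat) :
  0 < rho -> d <= 3 / 5 -> (13 <= N)%N -> 3 / 2 * rho * N%:R <= m%:R ->
  (d - rho) * 'C(N, 2)%:R <= D%:R ->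
  d * 'C(N + m, 2)%:R <= ('C((N + m).-1, 2) - 'C(N.-1, 2) + D)%:R.
Proof.
case: N => // N rho0 d35 N13 m_lb D_lb.
rewrite addSn /= natrD natrB ?leq_bin2l ?leq_addr // !natr_bin2 natrD.
move: m_lb D_lb; rewrite natr_bin2 -natr1.
have {N13} N12 : 12 <= (N%:R : R) by rewrite (ler_nat R 12).
set x := (N%:R : R); set y := (m%:R : R); set z := (D%:R : R) => m_lb D_lb.
have y0 : 0 <= y by nra.
have : 2 / 5 * (2 * x + y + 1) <= (1 - d) * (2 * x + y + 1) by apply: ler_wpM2r; lra.
have : 3 / 2 * rho * (x + 1) * ((4 * x - 8) / 5) <= y * ((1 - d) * (2 * x + y + 1) - 2).
  by apply: ler_pM; nra.
nra.
Qed.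

Section Tilings.
Variables (a b c n : nat) (E : {set {set 'I_n}}).

Lemma is_KtilingP (s : seq (copy n)) :
  is_Ktiling a b c E s <->
  {in s, forall T, is_Kcopy a b c E T} /\
  pairwise (fun T1 T2 => [disjoint copy_verts T1 & copy_verts T2]) s.
Proof.
split=> [] [copies_s disj_s]; split=> //.
  by apply/(pairwiseP (set0, set0, set0)) => i j *; apply: disj_s.
by move=> i j ij js; move/(pairwiseP (set0, set0, set0)): disj_s; apply=> //; apply: ltn_trans js.
Qed.

Lemma card_copy_verts (T : copy n) : is_Kcopy a b c E T -> #|copy_verts T| = (a + b + c)%N.
Proof.
case: T => [[A B] C] [cA cB cC [dAB dAC dBC] _] /=.
rewrite -cA -cB -cC !cardsU setIUl (disjoint_setI0 dAB) (disjoint_setI0 dAC) (disjoint_setI0 dBC).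
by rewrite setU0 cards0 !subn0.
Qed.

Lemma card_tiling_cover (s : seq (copy n)) :
  is_Ktiling a b c E s -> #|tiling_cover s| = ((a + b + c) * size s)%N.
Proof.
case/is_KtilingP=> copies_s disj_s; rewrite card_bigcup_seq_disjoint //.
rewrite (eq_big_seq (fun=> (a + b + c)%N)) => [|T /copies_s]; last exact: card_copy_verts.
by rewrite big_const_seq count_predT iter_addn_0 mulnC.
Qed.

Lemma deficient_Ktiling_ge1 (R : numDomainType) (beta : R) :
  1 <= beta -> has_deficient_Ktiling a b c E beta.
Proof.
move=> beta_ge1; exists [::]; split; first by split=> // i j _; rewrite ltn0.
rewrite /tiling_cover big_nil setC0 cardsT card_ord.
by rewrite ler_peMl // ler0n.
Qed.

End Tilings.

Section Restriction.
Variables (a b c N n : nat) (g : 'I_N -> 'I_n).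
Hypothesis g_inj : injective g.
Variables (E' : {set {set 'I_N}}) (E : {set {set 'I_n}}).
Hypothesis trace_E : forall e : {set 'I_N}, g @: e \in E -> e \in E'.

Definition pull_copy (T : copy n) : copy N :=
  (g @^-1: T.1.1, g @^-1: T.1.2, g @^-1: T.2).

Lemma copy_verts_pull (T : copy n) : copy_verts (pull_copy T) = g @^-1: copy_verts T.
Proof. by case: T => [[A B] C]; rewrite /= !preimsetU. Qed.

Lemma Kcopy_pull (T : copy n) :
  is_Kcopy a b c E T -> copy_verts T \subset g @: setT -> is_Kcopy a b c E' (pull_copy T).
Proof.
case: T => [[A B] C] [cA cB cC [dAB dAC dBC] edges] /=.
rewrite !subUset => /andP[/andP[sA sB] sC].
split; rewrite ?card_preimset_inj //; first by split; apply: disjoint_preimset.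
move=> x y z; rewrite !inE => Ax By Cz; apply: trace_E.
by rewrite !imsetU !imset_set1; apply: edges.
Qed.

Lemma Ktiling_restrict (s : seq (copy n)) :
  is_Ktiling a b c E s ->
  exists s' : seq (copy N), is_Ktiling a b c E' s' /\
    (#|~: tiling_cover s'| + (n - N) <= #|~: tiling_cover s| + (a + b + c) * (n - N))%N.
Proof.
move=> tiling_s; have /is_KtilingP[copies_s disj_s] := tiling_s.
pose old := g @: [set: 'I_N]; pose inside (T : copy n) := copy_verts T \subset old.
pose s' := map pull_copy (filter inside s).
have tiling_s' : is_Ktiling a b c E' s'.
  apply/is_KtilingP; split.
    move=> _ /mapP[T + ->]; rewrite mem_filter => /andP[inT sT].
    exact: Kcopy_pull (copies_s T sT) inT.
  have disj_pull T1 T2 : [disjoint copy_verts T1 & copy_verts T2] ->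
      [disjoint copy_verts (pull_copy T1) & copy_verts (pull_copy T2)].
    by rewrite !copy_verts_pull; apply: disjoint_preimset.
  by rewrite pairwise_map; apply: sub_pairwise disj_pull (pairwise_filter inside disj_s).
exists s'; split=> //.
have card_new : #|~: old| = (n - N)%N.
  by have := cardsC old; rewrite card_ord card_imset // cardsT card_ord; lia.
have dropped : (count (predC inside) s <= n - N)%N.
  rewrite -card_new; apply: leq_trans (count_meeting_le (~: old) disj_s).
  by apply/eq_leq/eq_count => T; rewrite /= disjoints_subset setCK.
have := cardsC (tiling_cover s); have := cardsC (tiling_cover s').
rewrite !card_ord (card_tiling_cover tiling_s) (card_tiling_cover tiling_s') size_map.
rewrite -(count_predC inside s) size_filter.
have := leq_ord_inj g_inj; have := leq_mul (leqnn (a + b + c)) dropped; lia.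
Qed.

End Restriction.

Section Extension.
Variables (N n : nat) (g : 'I_N -> 'I_n).
Hypothesis g_inj : injective g.

Definition extension (E' : {set {set 'I_N}}) : {set {set 'I_n}} :=
  [set e : {set 'I_n} | (#|e| == 3) && ~~ (e \subset g @: setT)]
    :|: [set g @: e | e : {set 'I_N} in E'].

Variable E' : {set {set 'I_N}}.

Lemma extension_3graph : is_3graph E' -> is_3graph (extension E').
Proof.
move=> E'3 e; rewrite !inE => /orP[/andP[/eqP //] | /imsetP[e' e'E' ->]].
by rewrite card_imset //; apply: E'3.
Qed.

Lemma extension_trace (e : {set 'I_N}) : g @: e \in extension E' -> e \in E'.
Proof.
rewrite !inE imsetS ?subsetT // andbF /= => /imsetP[e' e'E'].
by move/(imset_inj g_inj)->.
Qed.

Lemma deg1_extension_new (v : 'I_n) :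
  v \notin g @: setT -> ('C(n.-1, 2) <= deg1 (extension E') v)%N.
Proof.
move=> v_new; have := card_triples_through (in_setT v); rewrite cardsT card_ord => <-.
apply/subset_leq_card/subsetP=> e; rewrite !inE => /and3P[-> ve _]; rewrite ve andbT /=.
by apply/orP; left; apply: contra v_new => /subsetP; apply.
Qed.

Lemma deg1_extension_image (u : 'I_N) :
  ('C(n.-1, 2) - 'C(N.-1, 2) + deg1 E' u <= deg1 (extension E') (g u))%N.
Proof.
set old := g @: [set: 'I_N].
set new := triples_through (g u) setT :\: triples_through (g u) old.
set images := [set g @: e | e : {set 'I_N} in [set e in E' | u \in e]].
have card_new : #|new| = ('C(n.-1, 2) - 'C(N.-1, 2))%N.
  rewrite cardsD (setIidPr _); last first.
    by apply/subsetP=> e; rewrite !inE subsetT => /and3P[-> -> _].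
  rewrite !card_triples_through ?imset_f ?inE //.
  by rewrite card_imset // !cardsT !card_ord.
have card_images : #|images| = deg1 E' u by rewrite card_imset //; apply: imset_inj.
have disj : [disjoint new & images].
  rewrite -setI_eq0; apply/eqP/setP=> e; rewrite !inE.
  apply/negP=> /andP[/and4P[not_old e3 ue _] /imsetP[e' _ def_e]].
  by move: not_old; rewrite e3 ue def_e (imsetS _ (subsetT e')).
apply: (@leq_trans #|new :|: images|).
  by rewrite cardsU (disjoint_setI0 disj) cards0 subn0 card_new card_images.
apply/subset_leq_card/subsetP=> e; rewrite inE => /orP[|/imsetP[e' + ->]]; rewrite !inE.
  case/andP=> not_old /and3P[e3 ue _].
  by move: not_old; rewrite e3 ue /= => ->.
by case/andP=> e'E' ue'; rewrite !imset_f // orbT.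
Qed.

Lemma min_deg1_extension (R : realFieldType) (d rho : R) :
  0 < rho -> d <= 3 / 5 -> (13 <= N)%N -> 3 / 2 * rho * N%:R <= (n - N)%:R ->
  min_deg1_ge E' ((d - rho) * 'C(N, 2)%:R) ->
  min_deg1_ge (extension E') (d * 'C(n, 2)%:R).
Proof.
move=> rho0 d35 N13 m_lb E'deg v; have le_Nn := leq_ord_inj g_inj.
case: (boolP (v \in g @: setT)) => [/imsetP[u _ ->] | v_new].
  apply: le_trans (_ : _ <= ('C(n.-1, 2) - 'C(N.-1, 2) + deg1 E' u)%:R) _.
    by rewrite -(subnKC le_Nn); apply: ler_bin2_gain (E'deg u).
  by rewrite ler_nat deg1_extension_image.
apply: le_trans (_ : _ <= 'C(n.-1, 2)%:R) _; last by rewrite ler_nat deg1_extension_new.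
by apply: ler_bin2_pred; rewrite // (leq_trans _ le_Nn) // (leq_trans _ N13).
Qed.

End Extension.

Theorem proposition4p8 (R : realType) (a b c : nat) (d beta rho : R) :
  (1 <= a)%N -> (a <= b)%N -> (b <= c)%N ->
  0 < d -> d <= 3 / 5 -> 0 < beta -> 0 < rho ->
  exists n0 : nat,
    (forall (n : nat) (E : {set {set 'I_n}}),
        (n0 < n)%N -> is_3graph E ->
        min_deg1_ge E (d * 'C(n, 2)%:R) ->
        has_deficient_Ktiling a b c E beta) ->
    forall (n' : nat) (E' : {set {set 'I_n'}}),
      (maxn n0 5 < n')%N -> is_3graph E' ->
      min_deg1_ge E' ((d - rho) * 'C(n', 2)%:R) ->
      has_deficient_Ktiling a b c E' (beta + 2 * (a + b + c)%:R * rho).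
Proof.
move=> _ _ _ _ d35 _ rho0; exists (maxn 13 (Num.truncn (2 / rho))).
move=> tiling_large N E' N_large E'3 E'deg.
have k0 : (0 : R) <= (a + b + c)%:R by [].
have [beta_ge1 | beta_lt1] := lerP 1 beta.
  by apply: deficient_Ktiling_ge1; rewrite -[1]addr0 lerD //; nra.
have N13 : (13 <= N)%N by move: N_large; rewrite !gtn_max => /andP[/andP[/ltnW]].
have rhoN : 2 < rho * N%:R.
  rewrite -ltr_pdivrMl // mulrC; apply: lt_le_trans (truncnS_gt _) _.
  by rewrite ler_nat; move: N_large; rewrite !gtn_max => /andP[/andP[_ ->]].
pose m := Num.truncn (2 * rho * N%:R).
have m_ub : (m%:R : R) <= 2 * rho * N%:R by rewrite truncn_le; nra.
have m_lb : 3 / 2 * rho * N%:R <= m%:R.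
  by have := truncnS_gt (2 * rho * N%:R); rewrite -/m -[m.+1%:R]natr1; nra.
have g_inj : injective (@lshift N m) by apply: lshift_inj.
have [s [tiling_s cover_s]] : has_deficient_Ktiling a b c (extension (@lshift N m) E') beta.
  apply: tiling_large; first by move: N_large; lia.
    exact: extension_3graph.
  by apply: (min_deg1_extension g_inj rho0 d35 N13); rewrite ?addKn.
have [s' [tiling_s' cover_s']] := Ktiling_restrict g_inj (@extension_trace _ _ _ g_inj E') tiling_s.
exists s'; split=> //; move: cover_s cover_s'; rewrite addKn -(ler_nat R) !natrD natrM.
nra.
Qed.
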